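(* Let $A=\begin{pmatrix} a & b\\ c & d\end{pmatrix}$ be a $2\times 2$ matrix with positive rational entries. The alternate minimization limit $S(A)$ of $A$ has rational entries if and only if $ad/(bc)$ is the square of a rational number.
   Context: For an $n\times n$ matrix $A=(a_{i,j})$ let $\mathrm{row}_i(A)=\sum_j a_{i,j}$ and $\mathrm{col}_j(A)=\sum_i a_{i,j}$. For a matrix $A$ with positive entries let $X(A)=\mathrm{diag}(1/\mathrm{row}_1(A),\ldots,1/\mathrm{row}_n(A))$ and $Y(A)=\mathrm{diag}(1/\mathrm{col}_1(A),\ldots,1/\mathrm{col}_n(A))$. The alternate minimization sequence of $A$ is defined by $A^{(0)}=A$, $A^{(2k+1)}=A^{(2k)}\,Y(A^{(2k)})$ and $A^{(2k+2)}=X(A^{(2k+1)})\,A^{(2k+1)}$ for $k\ge 0$; for positive matrices this sequence converges, and its limit $S(A)=\lim_{\ell\to\infty}A^{(\ell)}$ (a doubly stochastic matrix, i.e. all row and column sums equal $1$) is called the alternate minimization limit of $A$. *)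

From HB Require Import structures.
From mathcomp Require Import all_boot all_order all_algebra.
From mathcomp Require Import all_classical all_reals all_analysis.
Set Implicit Arguments. Unset Strict Implicit. Unset Printing Implicit Defensive.
Import Order.TTheory GRing.Theory Num.Theory numFieldNormedType.Exports.
Local Open Scope ring_scope.

Section AltMin.
Variables (R : realType) (n : nat).

Definition rowsum (A : 'M[R]_n) (i : 'I_n) : R := \sum_(j < n) A i j.
Definition colsum (A : 'M[R]_n) (j : 'I_n) : R := \sum_(i < n) A i j.

Definition Xmx (A : 'M[R]_n) : 'M[R]_n := diag_mx (\row_i (rowsum A i)^-1).
Definition Ymx (A : 'M[R]_n) : 'M[R]_n := diag_mx (\row_j (colsum A j)^-1).

Fixpoint altmin (A : 'M[R]_n) (l : nat) : 'M[R]_n :=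
  match l with
  | 0 => A
  | l'.+1 => let B := altmin A l' in
             if odd l' then Xmx B *m B else B *m Ymx B
  end.

Definition altmin_limit (A : 'M[R]_n) : 'M[R]_n :=
  \matrix_(i, j) limn (fun l => altmin A l i j).

End AltMin.

Definition is_rational {R : realType} (x : R) : Prop := exists q : rat, x = ratr q.

From HB Require Import structures.
From mathcomp Require Import all_boot all_order all_algebra.
From mathcomp Require Import all_classical all_reals all_analysis.
From mathcomp Require Import ring lra.
Import Order.TTheory GRing.Theory Num.Theory numFieldNormedType.Exports.
Set Implicit Arguments. Unset Strict Implicit. Unset Printing Implicit Defensive.
Local Open Scope ring_scope.
Local Open Scope classical_set_scope.

(* Row and column normalisation preserve the cross ratio ad/(bc) =: s^2 of a
   positive 2x2 matrix.  Hence from the first step on, every iterate is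
   [col_stoch s t] or [row_stoch s t], determined by the ratio t of the
   entries of its first column (resp. row), and each half-step replaces t by
   [next_ratio s t] = (t + s^2)/(t + 1).  This Moebius map fixes s and
   multiplies the Cayley coordinate (t - s)/(t + s) by (1 - s)/(1 + s), of
   absolute value < 1, so t tends to s and S(A) = [col_stoch s s], whose
   entries s/(1 + s) and 1/(1 + s) are rational exactly when s is. *)

Definition m22 {F : fieldType} (x y z w : F) : 'M[F]_2 :=
  \matrix_(i < 2, j < 2) if i == 0%N :> nat then (if j == 0%N :> nat then x else y)
                         else (if j == 0%N :> nat then z else w).

Lemma tr_m22 (F : fieldType) (x y z w : F) : (m22 x y z w)^T = m22 x z y w.
Proof.
apply/matrixP => i j; rewrite !mxE.
by case: i => [[|[|i]] Hi] //; case: j => [[|[|j]] Hj].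
Qed.

Lemma map_m22 (F K : fieldType) (f : {rmorphism F -> K}) (x y z w : F) :
  map_mx f (m22 x y z w) = m22 (f x) (f y) (f z) (f w).
Proof. by apply/matrixP => i j; rewrite !mxE; case: ifP; case: ifP. Qed.

Definition col_stoch {F : fieldType} (s t : F) : 'M[F]_2 :=
  m22 (t / (t + 1)) (t / (t + s ^+ 2)) (1 / (t + 1)) (s ^+ 2 / (t + s ^+ 2)).

Definition row_stoch {F : fieldType} (s t : F) : 'M[F]_2 := (col_stoch s t)^T.

Definition next_ratio {F : fieldType} (s t : F) : F := (t + s ^+ 2) / (t + 1).

Lemma map_col_stoch (F K : fieldType) (f : {rmorphism F -> K}) (s t : F) :
  map_mx f (col_stoch s t) = col_stoch (f s) (f t).
Proof. by rewrite map_m22 !(fmorph_div, rmorphD, rmorphXn, rmorph1). Qed.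

Section Normalization.
Variable R : realType.

Lemma Xmx_mul_m22 (x y z w : R) : Xmx (m22 x y z w) *m m22 x y z w =
  m22 (x / (x + y)) (y / (x + y)) (z / (z + w)) (w / (z + w)).
Proof.
apply/matrixP => i j; rewrite mul_diag_mx !mxE /rowsum !big_ord_recr big_ord0 /= !mxE /=.
by case: i => [[|[|i]] Hi] //; case: j => [[|[|j]] Hj] //=; rewrite add0r mulrC.
Qed.

Lemma trmx_Xmx_mul n (M : 'M[R]_n) : (Xmx M *m M)^T = M^T *m Ymx M^T.
Proof.
rewrite trmx_mul tr_diag_mx; congr (_ *m diag_mx _); apply/rowP => i.
by rewrite !mxE /rowsum /colsum; under [in RHS]eq_bigr do rewrite mxE.
Qed.

Lemma m22_mul_Ymx (x y z w : R) : m22 x y z w *m Ymx (m22 x y z w) =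
  m22 (x / (x + z)) (y / (y + w)) (z / (x + z)) (w / (y + w)).
Proof.
by rewrite -[m22 x y z w]tr_m22 -trmx_Xmx_mul Xmx_mul_m22 tr_m22.
Qed.

Lemma Xmx_col_stoch (s t : R) : 0 < t ->
  Xmx (col_stoch s t) *m col_stoch s t = row_stoch s (next_ratio s t).
Proof.
move=> t_gt0; have s2_ge0 := sqr_ge0 s.
rewrite Xmx_mul_m22 /row_stoch /col_stoch /next_ratio tr_m22; congr m22; field.
all: by repeat (apply/andP; split); apply: lt0r_neq0; nra.
Qed.

Lemma row_stoch_Ymx (s t : R) : 0 < t ->
  row_stoch s t *m Ymx (row_stoch s t) = col_stoch s (next_ratio s t).
Proof. by move=> t_gt0; rewrite -trmx_Xmx_mul Xmx_col_stoch // trmxK. Qed.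

End Normalization.

Section RatioDynamics.
Variable R : realType.

Definition cayley (s t : R) : R := (t - s) / (t + s).

Lemma next_ratio_gt0 (s t : R) : 0 < t -> 0 < next_ratio s t.
Proof. by move=> t_gt0; apply: divr_gt0; have := sqr_ge0 s; lra. Qed.

Lemma cayley_next_ratio (s t : R) : 0 < s -> 0 <= t ->
  cayley s (next_ratio s t) = (1 - s) / (1 + s) * cayley s t.
Proof.
move=> s_gt0 t_ge0; rewrite /cayley /next_ratio; field.
by rewrite expr2; repeat (apply/andP; split); apply: lt0r_neq0; nra.
Qed.

Lemma cayleyK (s t : R) : 0 < s -> 0 <= t -> s * (1 + cayley s t) / (1 - cayley s t) = t.
Proof.
move=> s_gt0 t_ge0; rewrite /cayley; field.
by repeat (apply/andP; split); apply: lt0r_neq0; nra.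
Qed.

Variables (s t0 : R).
Hypotheses (s_gt0 : 0 < s) (t0_gt0 : 0 < t0).

Let ratio l := iter l (next_ratio s) t0.

Lemma iter_next_ratio_gt0 l : 0 < ratio l.
Proof. by elim: l => //= l IHl; apply: next_ratio_gt0. Qed.

Lemma cayley_iter_next_ratio l :
  cayley s (ratio l) = geometric (cayley s t0) ((1 - s) / (1 + s)) l.
Proof.
elim: l => [|l IHl]; first by rewrite /= expr0 mulr1.
rewrite /= cayley_next_ratio ?ltW ?iter_next_ratio_gt0 // IHl /= exprS.
by rewrite mulrCA.
Qed.

Lemma iter_next_ratio_cvg : ratio l @[l --> \oo] --> s.
Proof.
have contr : `|(1 - s) / (1 + s)| < 1.
  have s1_gt0 : 0 < 1 + s by rewrite addr_gt0.
  rewrite normf_div (gtr0_norm s1_gt0) ltr_pdivrMr // mul1r.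
  by apply/ltr_normlP; split; have := s_gt0; lra.
set w := geometric (cayley s t0) ((1 - s) / (1 + s)).
have w_cvg : w @ \oo --> 0 := cvg_geometric _ contr.
have -> : ratio = fun l => s * (1 + w l) / (1 - w l).
  by apply/funext => l; rewrite /w -cayley_iter_next_ratio cayleyK ?ltW ?iter_next_ratio_gt0.
suff: (fun l => s * (1 + w l) / (1 - w l)) @ \oo --> s * (1 + 0) / (1 - 0).
  by rewrite addr0 subr0 divr1 mulr1.
apply: cvgM; [apply: cvgM; [exact: cvg_cst | apply: cvgD; [exact: cvg_cst | exact: w_cvg]] |].
apply: cvgV; [by rewrite subr0 oner_neq0 | apply: cvgB; [exact: cvg_cst | exact: w_cvg]].
Qed.

End RatioDynamics.

Lemma cvg_if_odd (T : topologicalType) (u v : nat -> T) (x : T) :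
  u @ \oo --> x -> v @ \oo --> x -> (fun l => if odd l then u l else v l) @ \oo --> x.
Proof.
move=> u_cvg v_cvg U xU.
have uU : \oo (u @^-1` U) := u_cvg U xU.
have vU : \oo (v @^-1` U) := v_cvg U xU.
rewrite nbhs_filterE; apply: filterS2 uU vU => l /=; by case: odd.
Qed.

Section StochLimit.
Variables (R : realType) (s : R).
Hypothesis s_gt0 : 0 < s.

Lemma col_stoch_cvg (t : nat -> R) i j : t @ \oo --> s ->
  col_stoch s (t l) i j @[l --> \oo] --> col_stoch s s i j.
Proof.
move=> t_cvg.
have inv_cvg (q : R) : 0 <= q -> (t l + q)^-1 @[l --> \oo] --> (s + q)^-1.
  move=> q_ge0; apply: cvgV; first by apply: lt0r_neq0; have := s_gt0; lra.
  by apply: cvgD => //; exact: cvg_cst.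
under eq_fun do rewrite mxE; rewrite mxE.
case: ifP => _; case: ifP => _; apply: cvgM; try exact: t_cvg; try exact: cvg_cst;
  by apply: inv_cvg; rewrite ?sqr_ge0.
Qed.

Lemma row_stoch_fixed : row_stoch s s = col_stoch s s.
Proof.
rewrite /row_stoch /col_stoch tr_m22; congr m22; field;
  by rewrite !lt0r_neq0 ?addr_gt0 ?exprn_gt0.
Qed.

Variables (A : 'M[R]_2) (t0 : R).
Hypotheses (t0_gt0 : 0 < t0) (AY : A *m Ymx A = col_stoch s t0).

Lemma altminS_stoch l : altmin A l.+1 =
  if odd l then row_stoch s (iter l (next_ratio s) t0)
  else col_stoch s (iter l (next_ratio s) t0).
Proof.
have altminS k : altmin A k.+1 =
  if odd k then Xmx (altmin A k) *m altmin A k else altmin A k *m Ymx (altmin A k) by [].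
elim: l => [|l IHl]; first by rewrite altminS.
rewrite altminS IHl /=.
have t_gt0 : 0 < iter l (next_ratio s) t0 by exact: iter_next_ratio_gt0.
by case: odd; rewrite /= ?row_stoch_Ymx ?Xmx_col_stoch.
Qed.

Lemma altmin_cvg i j : altmin A l i j @[l --> \oo] --> col_stoch s s i j.
Proof.
pose t l := iter l (next_ratio s) t0.
have t_cvg : t l @[l --> \oo] --> s by exact: iter_next_ratio_cvg.
have E : (fun l => altmin A l.+1 i j) =
    fun l => if odd l then col_stoch s (t l) j i else col_stoch s (t l) i j.
  by apply/funext => l; rewrite altminS_stoch; case: odd; rewrite ?mxE.
rewrite -cvg_shiftS E.
apply: cvg_if_odd; last exact: col_stoch_cvg.
by rewrite -row_stoch_fixed mxE; exact: col_stoch_cvg.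
Qed.

Lemma altmin_limit_col_stoch : altmin_limit A = col_stoch s s.
Proof. by apply/matrixP => i j; rewrite mxE; apply: cvg_lim; last exact: altmin_cvg. Qed.

End StochLimit.

Section Rationality.
Variable R : realType.

Lemma is_rational_div (x y : R) : is_rational x -> is_rational y -> is_rational (x / y).
Proof. by move=> [p ->] [q ->]; exists (p / q); rewrite fmorph_div. Qed.

Lemma is_rational_col_stoch_fixed (s : R) : 0 < s ->
  (forall i j, is_rational (col_stoch s s i j)) <-> is_rational s.
Proof.
move=> s_gt0; split=> [entry_rat | [q ->] i j].
  have -> : s = col_stoch s s 0 0 / col_stoch s s 1 0.
    by rewrite !mxE /=; field; rewrite !lt0r_neq0 ?addr_gt0.
  exact: is_rational_div.
by exists (col_stoch q q i j); rewrite -map_col_stoch mxE.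
Qed.

Lemma is_rational_sqrt (K : rat) : 0 <= K ->
  is_rational (Num.sqrt (ratr K) : R) <-> exists q : rat, K = q ^+ 2.
Proof.
move=> K_ge0; split=> [[q sqrtK] | [q ->]].
  have ratr_inj : injective (ratr : rat -> R) by exact: fmorph_inj.
  exists q; apply: ratr_inj; rewrite rmorphXn.
  by move/(congr1 (fun x => x ^+ 2)): sqrtK; rewrite sqr_sqrtr ?ler0q.
by exists `|q|; rewrite rmorphXn sqrtr_sqr ratr_norm.
Qed.

End Rationality.

Theorem corollary5 (R : realType) (a b c d : rat)
  (ha : 0 < a) (hb : 0 < b) (hc : 0 < c) (hd : 0 < d) :
  let A : 'M[R]_2 :=
    \matrix_(i < 2, j < 2)
      ratr (if i == 0%N :> nat then (if j == 0%N :> nat then a else b)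
            else (if j == 0%N :> nat then c else d)) in
  (forall i j : 'I_2, is_rational (altmin_limit A i j)) <->
  (exists q : rat, a * d / (b * c) = q ^+ 2).
Proof.
move=> A; set K := a * d / (b * c).
have K_gt0 : 0 < K by rewrite divr_gt0 ?mulr_gt0.
set s : R := Num.sqrt (ratr K).
have s_gt0 : 0 < s by rewrite sqrtr_gt0 ltr0q.
have s2K : s ^+ 2 = ratr K by rewrite sqr_sqrtr // ler0q ltW.
have AY : A *m Ymx A = col_stoch s (ratr (a / c)).
  have -> : A = map_mx ratr (m22 a b c d) by apply/matrixP => i j; rewrite !mxE.
  rewrite map_m22 m22_mul_Ymx /col_stoch s2K /K !(fmorph_div, rmorphM).
  have [a_gt0 b_gt0 c_gt0 d_gt0] :
      [/\ 0 < ratr a :> R, 0 < ratr b :> R, 0 < ratr c :> R & 0 < ratr d :> R].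
    by rewrite !ltr0q.
  by congr m22; field; repeat (apply/andP; split); apply: lt0r_neq0; nra.
have t0_gt0 : 0 < ratr (a / c) :> R by rewrite ltr0q divr_gt0.
rewrite (altmin_limit_col_stoch s_gt0 t0_gt0 AY) is_rational_col_stoch_fixed //.
exact: is_rational_sqrt (ltW K_gt0).
Qed.
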